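(* There exists no ideal test, i.e., no test that is ideal with respect to the set $F$ of all forecasting strategies.
   Context: Let $\Omega=\{0,1\}$, $\Omega^\infty$ the set of infinite sequences $\omega=(\omega_1,\omega_2,\dots)$, and $\omega^t=(\omega_1,\dots,\omega_t)$ (also used for the cylinder set of all sequences with this prefix; $\omega^0=\emptyset$). $\mathcal G_t$ is the $\sigma$-algebra generated by the length-$t$ cylinders and $\mathcal G_\infty$ the $\sigma$-algebra generated by all cylinders. $\Delta(\Omega)$ is the set of probability distributions on $\Omega$; for $p\in\Delta(\Omega)$ and $x\in\Omega$, $p[x]$ is the probability of $x$. A forecasting strategy is a map $f:\bigcup_{t\ge0}(\Omega\times\Delta(\Omega)\times\Delta(\Omega))^t\to\Delta(\Omega)$; $F$ is the set of all forecasting strategies. Given an ordered pair $\vec f=(f,g)\in F\times F$ and $\omega\in\Omega^\infty$, the play path $(\omega,\vec f)$ is defined recursively: $(\omega,\vec f)^0=\emptyset$ and its $t$-th entry is $(\omega_t,f((\omega,\vec f)^{t-1}),g((\omega,\vec f)^{t-1}))$. The pair $\vec f$ induces two probability measures on $(\Omega^\infty,\mathcal G_\infty)$, again denoted $f$ and $g$, determined by $f(\omega^t)=\prod_{n=1}^t f((\omega,\vec f)^{n-1})[\omega_n]$ and $g(\omega^t)=\prod_{n=1}^t g((\omega,\vec f)^{n-1})[\omega_n]$. A (cardinal comparison) test is a sequence $T=(T_t)_{t>0}$ of $\mathcal G_t$-measurable functions $T_t:(\Omega\times\Delta(\Omega)\times\Delta(\Omega))^\infty\to[0,1]$; write $T_t(\omega,\vec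 f)=T_t((\omega,\vec f))$. Let $A^{\vec f}_{T,f}=\{\omega: T_t(\omega,\vec f)\to1\}$ and $A^{\vec f}_{T,g}=\{\omega: T_t(\omega,\vec f)\to0\}$. A test $T$ is ideal with respect to $A\subseteq F$ if for all $f,g\in A$ with $g\ne f$, writing $\vec f=(f,g)$, $f(A^{\vec f}_{T,f})=g(A^{\vec f}_{T,g})=1$ (measures induced by $\vec f$). $T$ is ideal if it is ideal with respect to $F$. *)

From Stdlib Require Import Reals List.
Import ListNotations.
Open Scope R_scope.

(** Omega = {0,1} is [bool] (true = 1). *)

(** Delta(Omega): probability distributions on {0,1}, given by the
    probability assigned to [true]. *)
Record Dist : Type := mkDist {
  p1 : R;
  p1_nonneg : 0 <= p1;
  p1_le1 : p1 <= 1
}.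

Definition prob (p : Dist) (x : bool) : R := if x then p1 p else 1 - p1 p.

Definition History : Type := list (bool * Dist * Dist).

Definition Strategy : Type := History -> Dist.

(** infinite sequences omega = (omega_1, omega_2, ...) encoded with
    omega_{n+1} = w n. *)
Definition Seq : Type := nat -> bool.

Fixpoint play (f g : Strategy) (w : Seq) (t : nat) : History :=
  match t with
  | O => []
  | S n => play f g w n ++ [(w n, f (play f g w n), g (play f g w n))]
  end.

(** Probability, under the measure induced by strategy [h] in the play of
    the pair (f,g), of the cylinder omega^t:
    prod_{n=1}^t h((omega,(f,g))^{n-1})[omega_n]. *)
Fixpoint cyl_prob (h f g : Strategy) (w : Seq) (t : nat) : R :=
  match t with
  | O => 1
  | S n => cyl_prob h f g w n * prob (h (play f g w n)) (w n)
  end.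

(** [N] is a null set for the measure induced by [h] (in the play of (f,g)):
    its outer measure (Caratheodory extension from cylinders) is zero, i.e.
    for every eps > 0 it is covered by countably many cylinders of total
    probability at most eps. *)
Definition null_set (h f g : Strategy) (N : Seq -> Prop) : Prop :=
  forall eps : R, 0 < eps ->
  exists (c : nat -> Seq) (len : nat -> nat),
    (forall w, N w -> exists k, forall i, (i < len k)%nat -> w i = c k i) /\
    (forall n, sum_f_R0 (fun k => cyl_prob h f g (c k) (len k)) n <= eps).

(** A test: T t is the t-th function; being G_t-measurable, it is a function
    of the length-t prefix of the play path, with values in [0,1]. *)
Definition Test : Type := nat -> History -> R.

Definition is_test (T : Test) : Prop :=
  forall t h, 0 <= T t h <= 1.

Definition Tval (T : Test) (f g : Strategy) (w : Seq) (t : nat) : R :=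
  T t (play f g w t).

Definition A_f (T : Test) (f g : Strategy) (w : Seq) : Prop :=
  Un_cv (Tval T f g w) 1.
Definition A_g (T : Test) (f g : Strategy) (w : Seq) : Prop :=
  Un_cv (Tval T f g w) 0.

(** T is ideal w.r.t. the set of all strategies:
    f(A_f) = 1 and g(A_g) = 1, i.e. the complements are null. *)
Definition ideal (T : Test) : Prop :=
  forall f g : Strategy, g <> f ->
    null_set f f g (fun w => ~ A_f T f g w) /\
    null_set g f g (fun w => ~ A_g T f g w).

(** Two strategies that differ only on histories which never occur in their
    joint play induce the same measure.  Let [f] always forecast 1 with
    certainty, and let [g] repeat the forecast of [f] recorded in the first
    entry of the history: along every play this is [f]'s forecast, yet [g]
    differs from [f] as a function.  Both measures are the point mass at the
    all-ones sequence, so an ideal test would make [T_t] tend both to 1 and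
    to 0 along that sequence. *)

From Stdlib Require Import Reals List Lra Lia Classical.
Import ListNotations.
Open Scope R_scope.

Lemma sum_f_R0_ge_term (a : nat -> R) (n : nat) :
  (forall k, 0 <= a k) -> a n <= sum_f_R0 a n.
Proof.
  intros a_ge0; destruct n as [|n]; simpl; [lra|].
  pose proof (cond_pos_sum a n a_ge0); lra.
Qed.

Lemma prob_nonneg (p : Dist) (x : bool) : 0 <= prob p x.
Proof. destruct p, x; simpl; lra. Qed.

Lemma cyl_prob_nonneg (h f g : Strategy) (w : Seq) (t : nat) :
  0 <= cyl_prob h f g w t.
Proof.
  induction t as [|t IH]; simpl; [lra|].
  apply Rmult_le_pos; [exact IH | apply prob_nonneg].
Qed.

Lemma play_prefix (f g : Strategy) (w w' : Seq) (t : nat) :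
  (forall i, (i < t)%nat -> w i = w' i) -> play f g w t = play f g w' t.
Proof.
  induction t as [|t IH]; intros agree; simpl; [reflexivity|].
  rewrite IH, (agree t) by (lia || (intros i Hi; apply agree; lia)).
  reflexivity.
Qed.

Lemma cyl_prob_prefix (h f g : Strategy) (w w' : Seq) (t : nat) :
  (forall i, (i < t)%nat -> w i = w' i) ->
  cyl_prob h f g w t = cyl_prob h f g w' t.
Proof.
  induction t as [|t IH]; intros agree; simpl; [reflexivity|].
  rewrite IH, (play_prefix f g w w' t), (agree t)
    by (lia || (intros i Hi; apply agree; lia)).
  reflexivity.
Qed.

Lemma cyl_prob_sure (h f g : Strategy) (w : Seq) (t : nat) :
  (forall n, prob (h (play f g w n)) (w n) = 1) -> cyl_prob h f g w t = 1.
Proof.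
  intros sure; induction t as [|t IH]; simpl; [reflexivity|].
  rewrite IH, sure; ring.
Qed.

(* Every cylinder around an atom [w] has probability at least that of [w], so
   no countable cover of [w] by cylinders has total probability below it. *)
Lemma null_set_atom (h f g : Strategy) (N : Seq -> Prop) (w : Seq) (a : R) :
  0 < a -> (forall t, a <= cyl_prob h f g w t) -> N w -> ~ null_set h f g N.
Proof.
  intros a_gt0 atom Nw null.
  destruct (null (a / 2)) as [c [len [cover small]]]; [lra|].
  destruct (cover w Nw) as [k in_cyl].
  pose proof (cyl_prob_prefix h f g w (c k) (len k) in_cyl) as same.
  pose proof (sum_f_R0_ge_term (fun k => cyl_prob h f g (c k) (len k)) k
                (fun k => cyl_prob_nonneg h f g (c k) (len k))) as term.
  specialize (atom (len k)); specialize (small k); simpl in term; lra.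
Qed.

Lemma Tval_not_to_both (T : Test) (f g : Strategy) (w : Seq) :
  A_f T f g w -> ~ A_g T f g w.
Proof.
  intros to1 to0; pose proof (UL_sequence _ _ _ to1 to0); lra.
Qed.

Definition certain : Dist := mkDist 1 ltac:(lra) ltac:(lra).
Definition impossible : Dist := mkDist 0 ltac:(lra) ltac:(lra).

Definition always_one : Strategy := fun _ => certain.

Definition repeat_first : Strategy := fun hist =>
  match hist with
  | [] => certain
  | (_, p, _) :: _ => p
  end.

Definition ones : Seq := fun _ => true.

Lemma play_head (f g : Strategy) (w : Seq) (n : nat) :
  exists rest, play f g w (S n) = (w 0%nat, f [], g []) :: rest.
Proof.
  induction n as [|n [rest IH]]; [exists []; reflexivity|].
  eexists; change (play f g w (S (S n))) with
    (play f g w (S n) ++ [(w (S n), f (play f g w (S n)), g (play f g w (S n)))]).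
  rewrite IH; reflexivity.
Qed.

Lemma repeat_first_on_play (w : Seq) (n : nat) :
  repeat_first (play always_one repeat_first w n) = certain.
Proof.
  destruct n as [|n]; [reflexivity|].
  destruct (play_head always_one repeat_first w n) as [rest ->]; reflexivity.
Qed.

Lemma repeat_first_neq_always_one : repeat_first <> always_one.
Proof.
  intros same.
  pose proof (f_equal (fun s => p1 (s [(true, impossible, impossible)])) same).
  simpl in *; lra.
Qed.

Lemma ones_atom (h : Strategy) :
  (forall n, h (play always_one repeat_first ones n) = certain) ->
  forall t, 1 <= cyl_prob h always_one repeat_first ones t.
Proof.
  intros forecast t.
  rewrite cyl_prob_sure; [lra|].
  intros n; rewrite forecast; reflexivity.
Qed.

Theorem mainTheorem11 : ~ (exists T : Test, is_test T /\ ideal T).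
Proof.
  intros [T [_ T_ideal]].
  destruct (T_ideal always_one repeat_first repeat_first_neq_always_one)
    as [null_f null_g].
  destruct (classic (A_f T always_one repeat_first ones)) as [to1 | not_to1].
  - exact (null_set_atom _ _ _ _ ones 1 Rlt_0_1
             (ones_atom repeat_first (repeat_first_on_play ones))
             (Tval_not_to_both _ _ _ _ to1) null_g).
  - exact (null_set_atom _ _ _ _ ones 1 Rlt_0_1
             (ones_atom always_one (fun _ => eq_refl)) not_to1 null_f).
Qed.
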